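(* For all integers $n\ge 2$ and $b\ge 1$, the circulant graph $G_{nb,b}$ satisfies $\operatorname{box}(G_{nb,b})\le\chi(G_{nb,b})$.
   Context: For integers $a\ge 2b\ge 2$, $G_{a,b}$ is the graph with vertex set $\{0,1,\ldots,a-1\}$ in which distinct $u,v$ are adjacent if and only if $u\in\{v+b,v+b+1,\ldots,v+a-b\}$ with addition modulo $a$. The boxicity $\operatorname{box}(G)$ is the minimum nonnegative integer $k$ such that $G$ is isomorphic to the intersection graph of a family of boxes (Cartesian products of $k$ closed real intervals) in $\mathbb{R}^k$. $\chi(G)$ is the chromatic number. *)

From HB Require Import structures.
From mathcomp Require Import all_boot.
From Stdlib Require Reals.
Set Implicit Arguments. Unset Strict Implicit. Unset Printing Implicit Defensive.

Notation Real := Stdlib.Reals.Rdefinitions.R.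
Notation Rle := Stdlib.Reals.Rdefinitions.Rle.

(* The circulant graph G_{a,b} on {0,...,a-1}: u ~ v iff u <> v and
   u = v + t (mod a) for some t in {b,...,a-b}, i.e. (u - v) mod a in [b, a-b]. *)
Definition circ_adj (a b : nat) : rel 'I_a :=
  fun u v => (u != v) && (b <= (u + a - v) %% a <= a - b).
Arguments circ_adj : clear implicits.

Definition colorable (V : finType) (e : rel V) (k : nat) : Prop :=
  exists f : V -> 'I_k, forall u v : V, e u v -> f u != f v.

Definition is_chromatic_number (V : finType) (e : rel V) (k : nat) : Prop :=
  colorable e k /\ forall j, colorable e j -> k <= j.

(* Box representation in R^k: vertex v gets the box
   prod_{i<k} [lo v i, hi v i]; two boxes intersect iff every coordinate
   interval pair intersects. *)
Definition box_rep (V : finType) (e : rel V) (k : nat) : Prop :=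
  exists lo hi : V -> nat -> Real,
    (forall v i, i < k -> Rle (lo v i) (hi v i)) /\
    (forall u v : V, u != v ->
       (e u v <-> forall i, i < k -> Rle (lo u i) (hi v i) /\ Rle (lo v i) (hi u i))).

Definition is_boxicity (V : finType) (e : rel V) (k : nat) : Prop :=
  box_rep e k /\ forall j, box_rep e j -> k <= j.

(* Split {0,...,nb-1} into n blocks of b consecutive vertices.  Two distinct
   vertices are non-adjacent in G_{nb,b} exactly when one lies fewer than b
   steps after the other, i.e. they are in the same block, or the later one is
   in the cyclically next block with a smaller offset.  Hence the n blocks are
   independent sets and the block starts form an n-clique, so chi = n.  For
   boxicity, coordinate i shows block i as points r+1, block i+1 as intervals
   [0, r+1] and all other vertices as the full range [0, b]: the boxes of two
   vertices are disjoint in coordinate i exactly when one of them lies in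
   block i and the other less than b steps after it, so n coordinates
   suffice. *)
From mathcomp Require Import all_boot zify.
From Stdlib Require Import Reals Wf_nat Classical.
Set Implicit Arguments. Unset Strict Implicit. Unset Printing Implicit Defensive.

Lemma clique_card_le_colors (V : finType) (e : rel V) (m k : nat) (c : 'I_m -> V) :
  (forall i j, i != j -> e (c i) (c j)) -> colorable e k -> m <= k.
Proof.
move=> clique [f proper].
have inj_fc : injective (f \o c).
  move=> i j /= fij; apply/eqP; apply: contraT => nij.
  by have := proper _ _ (clique _ _ nij); rewrite fij eqxx.
by have := leq_card _ inj_fc; rewrite !card_ord.
Qed.

Lemma box_rep_boxicity (V : finType) (e : rel V) (k : nat) :
  box_rep e k -> exists bx, is_boxicity e bx /\ bx <= k.
Proof.
move=> ek.
have [bx [[ebx bx_min] _]] := dec_inh_nat_subset_has_unique_least_element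
  (box_rep e) (fun j => classic (box_rep e j)) (ex_intro _ k ek).
exists bx; split; last by apply/leP; exact: bx_min.
by split => // j ej; apply/leP; exact: bx_min.
Qed.

Lemma INR_leP (m k : nat) : Rle (INR m) (INR k) <-> m <= k.
Proof. by split => [/INR_le/leP | /leP/le_INR]. Qed.

Definition circ_diff (a x y : nat) : nat := if y <= x then x - y else x + a - y.

Lemma circ_diffE (a x y : nat) : x < a -> y < a -> (x + a - y) %% a = circ_diff a x y.
Proof.
move=> ltxa ltya; rewrite /circ_diff; case: leqP => lexy.
  by rewrite -addnBAC // modnDr modn_small //; lia.
by rewrite modn_small //; lia.
Qed.

Lemma circ_diff_adjE (a b x y : nat) : x < a -> y < a -> x != y ->
  (b <= circ_diff a x y <= a - b) = ~~ (circ_diff a x y < b) && ~~ (circ_diff a y x < b).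
Proof.
by move=> ltxa ltya nxy; rewrite /circ_diff; case: (leqP y x); case: (leqP x y) => *; lia.
Qed.

Section CirculantBlocks.

Variables n b : nat.
Hypothesis n_gt1 : 1 < n.
Hypothesis b_gt0 : 0 < b.

Definition next_block (q : nat) : nat := q.+1 %% n.

(* The vertex at offset [rv] of block [qv] lies fewer than [b] steps after the
   vertex at offset [ru] of block [qu]. *)
Definition precedes (qu ru qv rv : nat) : bool :=
  ((qu == qv) && (ru <= rv)) || ((qv == next_block qu) && (rv < ru)).

Lemma next_blockP (q : nat) : q < n ->
  (q.+1 < n /\ next_block q = q.+1) \/ (q = n.-1 /\ next_block q = 0).
Proof.
move=> ltqn; rewrite /next_block; case: (ltnP q.+1 n) => ltSq.
  by left; rewrite modn_small.
right; have eSq : q.+1 = n by lia.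
by rewrite eSq modnn; split => //; lia.
Qed.

Lemma circ_diff_precedes (qu ru qv rv : nat) :
  qu < n -> qv < n -> ru < b -> rv < b ->
  (circ_diff (n * b) (qv * b + rv) (qu * b + ru) < b) = precedes qu ru qv rv.
Proof.
move=> ltqu ltqv ltru ltrv; have := next_blockP ltqu.
rewrite /precedes /circ_diff; move: (next_block qu) => nqu nquE.
by do ! case: ifPn => /eqP ?; try case: leqP => ?; nia.
Qed.

Lemma block_lt (x : nat) : x < n * b -> x %/ b < n.
Proof. by move=> ltx; rewrite ltn_divLR. Qed.

Lemma circ_diff_lt_precedes (x y : nat) : x < n * b -> y < n * b ->
  (circ_diff (n * b) y x < b) = precedes (x %/ b) (x %% b) (y %/ b) (y %% b).
Proof.
move=> ltx lty; rewrite {1}(divn_eq x b) {1}(divn_eq y b).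
by rewrite circ_diff_precedes ?block_lt ?ltn_pmod.
Qed.

Lemma circ_adj_precedes (u v : 'I_(n * b)) :
  circ_adj (n * b) b u v =
  [&& u != v, ~~ precedes (u %/ b) (u %% b) (v %/ b) (v %% b)
            & ~~ precedes (v %/ b) (v %% b) (u %/ b) (u %% b)].
Proof.
rewrite /circ_adj circ_diffE //; case: eqVneq => //= nuv.
by rewrite circ_diff_adjE // !circ_diff_lt_precedes // andbC.
Qed.

Lemma block_offset_neq (u v : nat) : u != v -> (u %/ b != v %/ b) || (u %% b != v %% b).
Proof.
apply: contraR; rewrite negb_or !negbK => /andP[/eqP equv /eqP erv].
by rewrite (divn_eq u b) (divn_eq v b) equv erv.
Qed.

Lemma circ_colorable : colorable (circ_adj (n * b) b) n.
Proof.
exists (fun v => Ordinal (block_lt (ltn_ord v))) => u v.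
rewrite circ_adj_precedes /precedes => /and3P[_ nuv nvu].
apply: contra nuv => /eqP[equv]; rewrite equv eqxx /=.
by move: nvu; rewrite equv eqxx /= => /norP[]; rewrite -ltnNge => /ltnW ->.
Qed.

Lemma block_start_lt (i : 'I_n) : i * b < n * b.
Proof. by rewrite ltn_pmul2r. Qed.

Lemma circ_colors_ge (k : nat) : colorable (circ_adj (n * b) b) k -> n <= k.
Proof.
apply: clique_card_le_colors (fun i => Ordinal (block_start_lt i)) _ => i j nij.
have nij' : (i : nat) != j by [].
rewrite circ_adj_precedes /= !mulnK // !modnMl /precedes !ltnn !andbF !orbF.
by rewrite -val_eqE /= eqn_pmul2r // nij' (negbTE nij') eq_sym (negbTE nij').
Qed.

Definition box_lo (q r i : nat) : nat := if q == i then r.+1 else 0.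
Definition box_hi (q r i : nat) : nat :=
  if (q == i) || (q == next_block i) then r.+1 else b.

Definition boxes_meet_at (i qu ru qv rv : nat) : bool :=
  (box_lo qu ru i <= box_hi qv rv i) && (box_lo qv rv i <= box_hi qu ru i).

Lemma box_lo_le_hi (q r i : nat) : box_lo q r i <= box_hi q r i.
Proof. by rewrite /box_lo /box_hi; case: eqP. Qed.

Lemma boxes_meet_atE (i qu ru qv rv : nat) :
  i < n -> qu < n -> qv < n -> ru < b -> rv < b -> (qu != qv) || (ru != rv) ->
  boxes_meet_at i qu ru qv rv =
  ~~ (((qu == i) && precedes qu ru qv rv) || ((qv == i) && precedes qv rv qu ru)).
Proof.
move=> ltin ltqu ltqv ltru ltrv nuv; have := next_blockP ltin.
have at_i q r q' r' : (q == i) && precedes q r q' r' = (q == i) && precedes i r q' r'.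
  by case: eqP => [->|].
rewrite !at_i /boxes_meet_at /box_lo /box_hi /precedes.
move: (next_block i) => ni niE.
by do ! case: eqP => ? //=; try case: leqP => ? /=; lia.
Qed.

Lemma boxes_meet_allP (qu ru qv rv : nat) :
  qu < n -> qv < n -> ru < b -> rv < b -> (qu != qv) || (ru != rv) ->
  (forall i, i < n -> boxes_meet_at i qu ru qv rv) <->
  ~~ precedes qu ru qv rv && ~~ precedes qv rv qu ru.
Proof.
move=> ltqu ltqv ltru ltrv nuv; split => [meet | /andP[nuv' nvu'] i ltin].
  have := meet _ ltqu; have := meet _ ltqv.
  by rewrite !boxes_meet_atE // !eqxx /= => /norP[_ ->] /norP[-> _].
by rewrite boxes_meet_atE // negb_or !negb_and nuv' nvu' !orbT.
Qed.

Lemma circ_box_rep : box_rep (circ_adj (n * b) b) n.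
Proof.
exists (fun (v : 'I_(n * b)) i => INR (box_lo (v %/ b) (v %% b) i)).
exists (fun (v : 'I_(n * b)) i => INR (box_hi (v %/ b) (v %% b) i)).
split=> [v i _ | u v nuv]; first by apply/INR_leP/box_lo_le_hi.
rewrite circ_adj_precedes nuv /= -boxes_meet_allP ?block_lt ?ltn_pmod //;
  last exact: block_offset_neq.
split=> meet i ltin.
  by have /andP[? ?] := meet i ltin; split; apply/INR_leP.
by have [/INR_leP ? /INR_leP ?] := meet i ltin; apply/andP.
Qed.

End CirculantBlocks.

Theorem theorem4p1 (n b : nat) (hn : 2 <= n) (hb : 1 <= b) :
  exists bx chi : nat,
    [/\ is_boxicity (circ_adj (n * b) b) bx,
        is_chromatic_number (circ_adj (n * b) b) chi
      & bx <= chi].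
Proof.
have [bx [boxicity_bx le_bx_n]] := box_rep_boxicity (circ_box_rep hn hb).
exists bx, n; split=> //; split; [exact: circ_colorable | exact: circ_colors_ge].
Qed.
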